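(* Let $\phi:(\Gamma,w)\to(\Gamma',w')$ be a pseudo-harmonic morphism of vertex-weighted metric graphs with respect to loopless models $(G,\ell)$ and $(G',\ell')$. Then $\deg(\phi^*(K_{(\Gamma',w')}))=\deg(\phi)\deg(K_{(\Gamma',w')})$.
   Context: A vertex-weighted metric graph $(\Gamma,w)$ with loopless model $(G,\ell)$: $G$ a finite connected loopless multigraph, $\ell:E(G)\to\mathbb{R}_{>0}$, $w:V(G)\to\mathbb{Z}_{\ge0}$; $val(v)$ is the number of edges at $v$. Canonical divisor: $K_{(\Gamma,w)}=\sum_{v\in V(G)}(val(v)-2+2w(v))(v)$. A morphism of loopless models maps vertices to vertices and each edge $e=xy$ either to a vertex $\phi(x)=\phi(e)=\phi(y)$ ($U_\phi(e)=0$) or to an edge between $\phi(x),\phi(y)$ with $U_\phi(e)=\ell'(\phi(e))/\ell(e)\in\mathbb{Z}_{>0}$. Pseudo-harmonic: $M_\phi(v)=\sum_{e\ni v,\phi(e)=e'}U_\phi(e)$ is the same for all $e'\in E(G')$ incident to $\phi(v)$. $\deg\phi=\sum_{\phi(e)=e'}U_\phi(e)$ for any $e'\in E(G')$. Pullback: $\phi^*D'=\sum_{v\in V(G)}M_\phi(v)D'(\phi(v))(v)$. *)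

From HB Require Import structures.
From mathcomp Require Import all_boot all_order all_algebra.
From mathcomp Require Import reals.
Set Implicit Arguments. Unset Strict Implicit. Unset Printing Implicit Defensive.
Import Order.TTheory GRing.Theory Num.Theory.
Local Open Scope ring_scope.

Record wmodel (R : realType) := WModel {
  mV : finType;
  mE : finType;
  msrc : mE -> mV;
  mtgt : mE -> mV;
  mlen : mE -> R;
  mwt : mV -> nat }.

Section Defs.
Variable R : realType.

Section Graph.
Variable G : wmodel R.

Definition incident (v : mV G) (e : mE G) : bool :=
  (msrc e == v) || (mtgt e == v).

Definition adjacent : rel (mV G) :=
  fun u v => [exists e : mE G, ((msrc e == u) && (mtgt e == v))
                             || ((msrc e == v) && (mtgt e == u))].

Definition loopless : Prop := forall e : mE G, msrc e != mtgt e.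
Definition connected_graph : Prop := forall u v : mV G, connect adjacent u v.
Definition positive_lengths : Prop := forall e : mE G, 0 < mlen e.

Definition loopless_model : Prop :=
  [/\ loopless, connected_graph & positive_lengths].

Definition val (v : mV G) : nat := #|[set e : mE G | incident v e]|.

Definition divisor := mV G -> int.
Definition deg_div (D : divisor) : int := \sum_(v : mV G) D v.

Definition Kcan : divisor :=
  fun v => (val v)%:Z - 2 + 2 * (mwt v)%:Z.
End Graph.

Section Morphism.
Variables (G G' : wmodel R).
Variable phiV : mV G -> mV G'.
(* each edge is sent either to a vertex (inl) or to an edge (inr) *)
Variable phiE : mE G -> mV G' + mE G'.

Definition is_morphism : Prop :=
  forall e : mE G,
    match phiE e with
    | inl x => phiV (msrc e) = x /\ phiV (mtgt e) = x
    | inr e' =>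
        ((phiV (msrc e) = msrc e' /\ phiV (mtgt e) = mtgt e')
         \/ (phiV (msrc e) = mtgt e' /\ phiV (mtgt e) = msrc e'))
        /\ (mlen e' / mlen e \is a Num.nat) /\ (0 < mlen e' / mlen e)
    end.

Definition U (e : mE G) : nat :=
  match phiE e with
  | inl _ => 0%N
  | inr e' => Num.truncn (mlen e' / mlen e)
  end.

Definition Mloc (v : mV G) (e' : mE G') : nat :=
  \sum_(e : mE G | incident v e && (phiE e == inr e')) U e.

Definition pseudo_harmonic : Prop :=
  forall (v : mV G) (e1 e2 : mE G'),
    incident (phiV v) e1 -> incident (phiV v) e2 -> Mloc v e1 = Mloc v e2.

(* M_phi(v), computed with some edge of G' incident to phi(v)
   (well defined under pseudo-harmonicity; 0 if there is none) *)
Definition M (v : mV G) : nat :=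
  match [pick e' : mE G' | incident (phiV v) e'] with
  | Some e' => Mloc v e'
  | None => 0%N
  end.

(* deg phi, computed with respect to the edge e' of G' *)
Definition deg_at (e' : mE G') : nat :=
  \sum_(e : mE G | phiE e == inr e') U e.

Definition pullback (D' : divisor G') : divisor G :=
  fun v => (M v)%:Z * D' (phiV v).
End Morphism.
End Defs.

(* An edge e of G mapped onto an edge e' of G' has exactly one endpoint over
   each endpoint x of e', because e' is not a loop.  Hence the local degrees
   M_phi(v) of the vertices v over x add up to deg_e' phi, for any edge e' at
   x.  So deg_e' phi is the same for all edges at a common vertex, and by
   connectedness of G' it does not depend on e'.  Summing the pullback fibre by
   fibre then gives deg (phi^* D') = deg phi * deg D' for every divisor D' of
   G', in particular for the canonical divisor. *)
From HB Require Import structures.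
From mathcomp Require Import all_boot all_order all_algebra.
From mathcomp Require Import reals.
Import Order.TTheory GRing.Theory Num.Theory.
Local Open Scope ring_scope.

Lemma two_point_fiber [T T' : eqType] [f : T -> T'] [s t : T] [x : T'] :
  f s != f t -> (f s == x) || (f t == x) ->
  exists v0, forall v, (f v == x) && ((s == v) || (t == v)) = (v == v0).
Proof.
move=> fst; wlog /eqP fsx : s t fst / f s == x => [wlog|_].
  case/orP=> [fsx|ftx]; first by apply: wlog; rewrite ?fsx.
  have fts : f t != f s by rewrite eq_sym.
  have [|v0 fibre] := wlog t s fts ftx; first by rewrite ftx.
  by exists v0 => v; rewrite orbC.
exists s => v; rewrite -fsx; case: (eqVneq v s) => [->|vs]; first by rewrite !eqxx.
case: (eqVneq t v) => [<-|]; last by rewrite andbF.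
by rewrite eq_sym (negbTE fst).
Qed.

Section Incidence.
Context {R : realType} {G : wmodel R}.

Lemma incident_src (e : mE G) : incident (msrc e) e.
Proof. by rewrite /incident eqxx. Qed.

Lemma incident_tgt (e : mE G) : incident (mtgt e) e.
Proof. by rewrite /incident eqxx orbT. Qed.

Lemma adjacent_incident (u v : mV G) :
  adjacent u v -> exists2 e, incident u e & incident v e.
Proof.
case/existsP=> e /orP[|] /andP[/eqP<- /eqP<-]; exists e;
  by rewrite ?incident_src ?incident_tgt.
Qed.

Lemma connected_incident_edge :
  connected_graph G -> mE G -> forall x : mV G, exists e, incident x e.
Proof.
move=> cG e0 x; have /connectP[[|y p] /= xp e0_x] := cG x (msrc e0).
  by exists e0; rewrite -e0_x incident_src.
by case/andP: xp => /adjacent_incident[e xe _] _; exists e.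
Qed.

End Incidence.

Section PseudoHarmonicMorphism.
Variables (R : realType) (G G' : wmodel R).
Variables (phiV : mV G -> mV G') (phiE : mE G -> mV G' + mE G').
Hypothesis loopless_G' : loopless G'.
Hypothesis phi_morphism : is_morphism phiV phiE.

Lemma morphism_incident x [e e'] : phiE e = inr e' ->
  incident x e' = (phiV (msrc e) == x) || (phiV (mtgt e) == x).
Proof.
move=> phi_e; have := phi_morphism e; rewrite phi_e /incident.
by case=> -[[-> ->]|[-> ->]] _ //; apply: orbC.
Qed.

Lemma morphism_ends_neq [e e'] : phiE e = inr e' ->
  phiV (msrc e) != phiV (mtgt e).
Proof.
move=> phi_e; have := phi_morphism e; rewrite phi_e.
by case=> -[[-> ->]|[-> ->]] _; [|rewrite eq_sym]; apply: loopless_G'.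
Qed.

Lemma sum_fiber_Mloc [e' x] : incident x e' ->
  (\sum_(v | phiV v == x) Mloc phiE v e')%N = deg_at phiE e'.
Proof.
move=> xe'; rewrite /Mloc /deg_at (exchange_big_dep (fun e => phiE e == inr e')) /=;
  last by move=> v e _ /andP[].
apply: eq_bigr => e /eqP phi_e.
have x_end : (phiV (msrc e) == x) || (phiV (mtgt e) == x).
  by rewrite -(morphism_incident x phi_e).
have [v0 fibre] := two_point_fiber (morphism_ends_neq phi_e) x_end.
by rewrite (eq_bigl (pred1 v0)) ?big_pred1_eq // => v; rewrite phi_e eqxx andbT fibre.
Qed.

Hypothesis phi_pseudo_harmonic : pseudo_harmonic phiV phiE.

Lemma M_Mloc [v e'] : incident (phiV v) e' -> M phiV phiE v = Mloc phiE v e'.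
Proof.
rewrite /M; case: pickP => [e ve ve'|none]; first exact: phi_pseudo_harmonic.
by rewrite none.
Qed.

Lemma sum_fiber_M [e' x] : incident x e' ->
  (\sum_(v | phiV v == x) M phiV phiE v)%N = deg_at phiE e'.
Proof.
move=> xe'; rewrite -(sum_fiber_Mloc xe'); apply: eq_bigr => v /eqP vx.
by apply: M_Mloc; rewrite vx.
Qed.

Lemma deg_at_incident [x e1 e2] : incident x e1 -> incident x e2 ->
  deg_at phiE e1 = deg_at phiE e2.
Proof. by move=> xe1 xe2; rewrite -(sum_fiber_M xe1) -(sum_fiber_M xe2). Qed.

Hypothesis connected_G' : connected_graph G'.

Lemma deg_at_const e1 e2 : deg_at phiE e1 = deg_at phiE e2.
Proof.
pose same_deg := [pred x | [forall (f | incident x f), deg_at phiE f == deg_at phiE e2]].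
have same_deg_edge y z e : incident y e -> incident z e ->
    y \in same_deg -> z \in same_deg.
  move=> ye ze /forall_inP same_y; apply/forall_inP => f zf.
  by rewrite (deg_at_incident zf ze) same_y.
have closed_same_deg : closed (@adjacent R G') same_deg.
  move=> y z /adjacent_incident[e ye ze].
  by apply/idP/idP; [apply: same_deg_edge ye ze | apply: same_deg_edge ze ye].
have : msrc e2 \in same_deg.
  by apply/forall_inP => f sf; rewrite (deg_at_incident sf (incident_src e2)).
rewrite (closed_connect closed_same_deg (connected_G' _ (msrc e1))).
by move/forall_inP/(_ e1 (incident_src e1))/eqP.
Qed.

Lemma deg_pullback (D' : divisor G') e' :
  deg_div (pullback phiV phiE D') = (deg_at phiE e')%:Z * deg_div D'.
Proof.
rewrite /deg_div /pullback (partition_big phiV predT) //= big_distrr /=.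
apply: eq_bigr => x _; have [f xf] := connected_incident_edge connected_G' e' x.
rewrite (eq_bigr (fun v => (M phiV phiE v)%:Z * D' x)) => [|v /eqP -> //].
rewrite -big_distrl /= -(deg_at_const f e') -(sum_fiber_M xf) -natz natr_sum.
by congr (_ * _); apply: eq_bigr => v _; rewrite natz.
Qed.

End PseudoHarmonicMorphism.

Theorem lemma6p9 (R : realType) (G G' : wmodel R)
    (phiV : mV G -> mV G') (phiE : mE G -> mV G' + mE G') :
  @loopless_model R G -> @loopless_model R G' ->
  is_morphism phiV phiE ->
  pseudo_harmonic phiV phiE ->
  forall e' : mE G',
    deg_div (pullback phiV phiE (@Kcan R G')) =
    (deg_at phiE e')%:Z * deg_div (@Kcan R G').
Proof.
(* Only G' has to be a loopless connected model; nothing is needed of G. *)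
move=> _ [loopless_G' connected_G' _] phi_morphism phi_pseudo_harmonic e'.
exact: deg_pullback loopless_G' phi_morphism phi_pseudo_harmonic connected_G' _ e'.
Qed.
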